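(* Let $p$ be an integer with $|p|>1$ and let $G=\mathbb{Z}[1/p]\rtimes\mathbb{Z}$ with multiplication $(f_1,c_1)(f_2,c_2)=(f_1+p^{-c_1}f_2,\,c_1+c_2)$. Let $C=\{(f_i,c_i)\}$ be a finite generating set of $G$ closed under inverses, let $c=\max\{c_i \mid (f_i,c_i)\in C\}$, and let $B(n)$ denote the set of elements of $G$ of word length at most $n$ with respect to $C$. Then there is a constant $M$ (depending on $p$ and $C$) such that for every $n\ge 0$ and every element $(f,0)\in B(n)$, either $|f|\le M|p|^{nc/4}$ or $\mathrm{denom}(f)\le M|p|^{nc/4}$. Further, for every such $(f,0)\in B(n)$, both $|f|\le M|p|^{nc/2}$ and $\mathrm{denom}(f)\le M|p|^{nc/2}$.
   Context: $G$ is isomorphic to the Baumslag-Solitar group $B_{1,p}=\langle a,t\mid t^{-1}at=a^p\rangle$. Every element of $\mathbb{Z}[1/p]$ has the form $m/p^{n}$ with $m,n\in\mathbb{Z}$. For $f\in\mathbb{Z}[1/p]$, $|f|$ is its usual absolute value, and the denominator $\mathrm{denom}(f)$ is $|p|^{n}$ where $n\ge 0$ is the least nonnegative integer such that $f=m/p^{n}$ for some integer $m$. *)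

From Stdlib Require Import Reals ZArith List.
Open Scope R_scope.

(* Elements of G = Z[1/p] x| Z are pairs (f, c) with f a real in Z[1/p]. *)
Definition in_Zp (p : Z) (f : R) : Prop :=
  exists (m : Z) (k : nat), f = IZR m / (IZR p ^ k).

Definition in_G (p : Z) (g : R * Z) : Prop := in_Zp p (fst g).

Definition gmul (p : Z) (x y : R * Z) : R * Z :=
  (fst x + powerRZ (IZR p) (- snd x) * fst y, (snd x + snd y)%Z).

Definition gone : R * Z := (0, 0%Z).

Definition ginv (p : Z) (x : R * Z) : R * Z :=
  (- (powerRZ (IZR p) (snd x) * fst x), (- snd x)%Z).

Definition word_prod (p : Z) (w : list (R * Z)) : R * Z :=
  fold_right (gmul p) gone w.

Definition in_ball (p : Z) (C : list (R * Z)) (n : nat) (g : R * Z) : Prop :=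
  exists w : list (R * Z),
    (forall x, In x w -> In x C) /\ (length w <= n)%nat /\ word_prod p w = g.

(* C generates G: every element of G is a finite product of elements of C
   (C is closed under inverses, so this is the usual notion). *)
Definition generates (p : Z) (C : list (R * Z)) : Prop :=
  forall g, in_G p g -> exists w : list (R * Z),
    (forall x, In x w -> In x C) /\ word_prod p w = g.

Definition is_denom (p : Z) (f : R) (d : R) : Prop :=
  exists k : nat,
    d = IZR (Z.abs p) ^ k /\
    (exists m : Z, f = IZR m / (IZR p ^ k)) /\
    (forall (k' : nat) (m' : Z), f = IZR m' / (IZR p ^ k') -> (k <= k')%nat).

From Stdlib Require Import Reals ZArith List Lia Lra.
Open Scope R_scope.

(* A word w = x_1 ... x_l with product (f, 0) has f = sum_i f_i p^(t_i), where
   t_i is the exponent sum of the suffix x_i ... x_l.  These suffix sums form a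
   walk of l steps of size at most c from 0 back to 0; if its minimum is m, then
   p^(K - m) f is an integer (K clearing the denominators of C), and its maximum
   is at most l c / 2 + m.  A potential argument shows that the sum of the
   |p|^(t_i) is, up to a constant factor and an additive O(l), dominated by
   |p|^(l c / 2 + m).  So |f| is small when m <= - l c / 4 and denom(f) is
   small otherwise, and both are always O(|p|^(l c / 2)). *)

Fixpoint total (ds : list Z) : Z :=
  match ds with nil => 0%Z | d :: ds' => (d + total ds')%Z end.

Fixpoint lowest (ds : list Z) : Z :=
  match ds with nil => 0%Z | d :: ds' => Z.min (lowest ds') (d + total ds') end.

Fixpoint suffix_weight (q : R) (ds : list Z) : R :=
  match ds with
  | nil => 0
  | d :: ds' => Rpower q (IZR (d + total ds')) + suffix_weight q ds'
  end.

Definition potential (c : Z) (ds : list Z) : Z :=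
  (Z.of_nat (length ds) * c + Z.abs (total ds) + 2 * lowest ds)%Z.

Definition is_int (r : R) : Prop := exists z : Z, r = IZR z.

Lemma lowest_le_min ds : (lowest ds <= Z.min 0 (total ds))%Z.
Proof. induction ds as [|d ds IH]; simpl; lia. Qed.

Lemma total_le_length_mul c ds :
  Forall (fun d => d <= c)%Z ds -> (total ds <= Z.of_nat (length ds) * c)%Z.
Proof.
  induction 1 as [|d ds Hd _ IH]; cbn [total length]; [lia|].
  rewrite Nat2Z.inj_succ, Z.mul_succ_l; lia.
Qed.

Section Walk.

Variable c : Z.

Lemma total_sub_twice_lowest ds :
  Forall (fun d => Z.abs d <= c)%Z ds ->
  (total ds - 2 * lowest ds <= Z.of_nat (length ds) * c)%Z.
Proof.
  induction 1 as [|d ds Hd _ IH]; cbn [total lowest length]; [lia|].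
  pose proof (lowest_le_min ds).
  rewrite Nat2Z.inj_succ, Z.mul_succ_l; lia.
Qed.

Lemma two_total_le_potential ds :
  Forall (fun d => Z.abs d <= c)%Z ds -> (2 * total ds <= potential c ds)%Z.
Proof.
  intros Hds; pose proof (total_sub_twice_lowest ds Hds).
  unfold potential; lia.
Qed.

Lemma potential_cons d ds :
  (Z.abs d <= c)%Z -> (potential c ds <= potential c (d :: ds))%Z.
Proof.
  intros Hd; pose proof (lowest_le_min ds).
  unfold potential; simpl length; simpl total; simpl lowest.
  rewrite Nat2Z.inj_succ, Z.mul_succ_l; lia.
Qed.

Lemma potential_cons_gain d ds :
  (Z.abs d <= c)%Z -> d <> (- c)%Z -> (0 < d + total ds)%Z ->
  (potential c ds + 1 <= potential c (d :: ds))%Z.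
Proof.
  intros Hd Hdc Hpos; pose proof (lowest_le_min ds).
  unfold potential; simpl length; simpl total; simpl lowest.
  rewrite Nat2Z.inj_succ, Z.mul_succ_l; lia.
Qed.

End Walk.

Lemma Rpower_pos q a : 0 < Rpower q a.
Proof. apply exp_pos. Qed.

Lemma Rpower_sub_half_le q x : 2 <= q -> 7 * Rpower q (x - 1 / 2) <= 5 * Rpower q x.
Proof.
  intros Hq.
  assert (Hsqrt : 7 / 5 <= Rpower q (/ 2)).
  { rewrite Rpower_sqrt by lra.
    rewrite <- (sqrt_square (7 / 5)) by lra.
    apply sqrt_le_1_alt; lra. }
  unfold Rminus; rewrite Rpower_plus.
  replace (- (1 / 2)) with (- / 2) by field; rewrite Rpower_Ropp.
  pose proof (Rpower_pos q x); pose proof (Rpower_pos q (/ 2)).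
  apply Rmult_le_reg_r with (Rpower q (/ 2)); [lra|].
  field_simplify; [nra | lra].
Qed.

Lemma suffix_weight_le c q ds :
  (1 <= c)%Z -> 2 <= q -> Forall (fun d => Z.abs d <= c)%Z ds ->
  suffix_weight q ds + Rpower q (IZR (total ds))
    <= 7 * Rpower q (IZR (potential c ds) / 2) + 2 * INR (length ds).
Proof.
  intros Hc Hq.
  induction 1 as [|d ds Hd Hds IH].
  - simpl; rewrite Rpower_O by lra.
    replace (IZR (potential c nil) / 2) with 0 by (unfold potential; simpl; field).
    rewrite Rpower_O by lra; lra.
  - cbn [suffix_weight total length]; rewrite S_INR.
    set (s := total ds) in *.
    assert (Hmono : Rpower q (IZR (potential c ds) / 2)
                    <= Rpower q (IZR (potential c (d :: ds)) / 2)).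
    { apply Rle_Rpower; [lra|].
      apply Rmult_le_compat_r; [lra|]. apply IZR_le, potential_cons; assumption. }
    pose proof (Rpower_pos q (IZR s)); pose proof (Rpower_pos q (IZR (d + s))).
    destruct (Z_le_gt_dec (d + s) 0) as [Hneg|Hpos].
    + assert (Rpower q (IZR (d + s)) <= 1).
      { rewrite <- (Rpower_O q) by lra. apply Rle_Rpower, (IZR_le _ 0); [lra | assumption]. }
      lra.
    + destruct (Z.eq_dec d (- c)) as [Hdc|Hdc].
      * (* a step down by c halves the weight of the suffix *)
        assert (2 * Rpower q (IZR (d + s)) <= Rpower q (IZR s)).
        { replace (IZR s) with (IZR (d + s) + IZR c)
            by (rewrite plus_IZR, Hdc, opp_IZR; ring).
          rewrite Rpower_plus.
          assert (2 <= Rpower q (IZR c)).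
          { apply Rle_trans with (Rpower q 1); [rewrite Rpower_1; lra|].
            apply Rle_Rpower; [lra|]. apply (IZR_le 1); assumption. }
          nra. }
        lra.
      * (* otherwise the potential grows by 1: the gained factor sqrt q pays for the new term *)
        set (Y := Rpower q (IZR (potential c (d :: ds)) / 2)) in *.
        assert (Htop : Rpower q (IZR (d + s)) <= Y).
        { apply Rle_Rpower; [lra|].
          pose proof (two_total_le_potential c (d :: ds) (Forall_cons d Hd Hds)) as H2.
          change (total (d :: ds)) with (d + s)%Z in H2.
          apply IZR_le in H2; rewrite mult_IZR in H2; lra. }
        assert (Hgain : 7 * Rpower q (IZR (potential c ds) / 2) <= 5 * Y).
        { apply Rle_trans with (7 * Rpower q (IZR (potential c (d :: ds)) / 2 - 1 / 2)).
          - apply Rmult_le_compat_l; [lra|]. apply Rle_Rpower; [lra|].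
            pose proof (potential_cons_gain c d ds Hd Hdc (Z.gt_lt _ _ Hpos)) as H1.
            apply IZR_le in H1; rewrite plus_IZR in H1; lra.
          - apply Rpower_sub_half_le; assumption. }
        lra.
Qed.

Lemma ln_gt_0 x : 1 < x -> 0 < ln x.
Proof. intros Hx; rewrite <- ln_1; apply ln_increasing; lra. Qed.

Lemma linear_le_Rpower q x : 1 < q -> 0 <= x -> x <= 4 / ln q * Rpower q (x / 4).
Proof.
  intros Hq Hx.
  pose proof (ln_gt_0 q Hq) as Hln.
  pose proof (exp_ineq1_le (x / 4 * ln q)).
  unfold Rpower.
  apply Rmult_le_reg_l with (ln q / 4); [lra|].
  field_simplify; [|lra]. nra.
Qed.

Lemma suffix_weight_balanced_le c q ds :
  (1 <= c)%Z -> 2 <= q -> Forall (fun d => Z.abs d <= c)%Z ds -> total ds = 0%Z ->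
  suffix_weight q ds
    <= 7 * Rpower q (INR (length ds) * IZR c / 2 + IZR (lowest ds))
       + 8 / ln q * Rpower q (INR (length ds) * IZR c / 4).
Proof.
  intros Hc Hq Hds Hs.
  pose proof (suffix_weight_le c q ds Hc Hq Hds) as Hweight.
  rewrite Hs, Rpower_O in Hweight by lra.
  replace (IZR (potential c ds) / 2) with (INR (length ds) * IZR c / 2 + IZR (lowest ds))
    in Hweight
    by (unfold potential; rewrite Hs, !plus_IZR, !mult_IZR, <- INR_IZR_INZ; simpl; field).
  assert (Hcr : 1 <= IZR c) by (apply IZR_le; assumption).
  pose proof (pos_INR (length ds)).
  pose proof (linear_le_Rpower q (INR (length ds) * IZR c) ltac:(lra) ltac:(nra)).
  replace (8 / ln q) with (2 * (4 / ln q)) by (unfold Rdiv; ring).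
  nra.
Qed.

Lemma snd_word_prod p w : snd (word_prod p w) = total (map snd w).
Proof. induction w as [|x w IH]; simpl; [reflexivity|]. now rewrite IH. Qed.

Lemma Rabs_powerRZ_IZR p z :
  p <> 0%Z -> Rabs (powerRZ (IZR p) z) = Rpower (IZR (Z.abs p)) (IZR z).
Proof.
  intros Hp.
  rewrite <- powerRZ_Rpower by (apply IZR_lt; lia).
  rewrite abs_IZR.
  destruct z; simpl.
  - apply Rabs_R1.
  - symmetry; apply RPow_abs.
  - now rewrite Rabs_inv, <- RPow_abs.
Qed.

Lemma Rabs_fst_word_prod_le p F w :
  p <> 0%Z -> (forall x, In x w -> Rabs (fst x) <= F) ->
  Rabs (fst (word_prod p w)) * Rpower (IZR (Z.abs p)) (IZR (total (map snd w)))
    <= F * suffix_weight (IZR (Z.abs p)) (map snd w).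
Proof.
  intros Hp; induction w as [|x w IH]; intros Hw.
  - simpl; rewrite Rabs_R0; lra.
  - cbn [word_prod fold_right gmul fst snd map total suffix_weight].
    fold (word_prod p w).
    specialize (IH (fun y Hy => Hw y (or_intror Hy))).
    pose proof (Hw x (or_introl eq_refl)) as Hx.
    set (q := IZR (Z.abs p)) in *.
    set (s := total (map snd w)) in *.
    assert (Hsplit : Rpower q (IZR (snd x + s)) = Rpower q (IZR (snd x)) * Rpower q (IZR s))
      by (rewrite <- Rpower_plus, plus_IZR; reflexivity).
    assert (Hinv : Rpower q (IZR (- snd x)) * Rpower q (IZR (snd x)) = 1)
      by (rewrite <- Rpower_plus, opp_IZR, Rplus_opp_l; apply Rpower_O, IZR_lt; lia).
    pose proof (Rpower_pos q (IZR (snd x + s))).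
    apply Rle_trans with
      ((Rabs (fst x) + Rpower q (IZR (- snd x)) * Rabs (fst (word_prod p w)))
       * Rpower q (IZR (snd x + s))).
    { apply Rmult_le_compat_r; [lra|].
      unfold q; rewrite <- (Rabs_powerRZ_IZR p (- snd x) Hp), <- Rabs_mult.
      apply Rabs_triang. }
    rewrite Rmult_plus_distr_r.
    replace (Rpower q (IZR (- snd x)) * Rabs (fst (word_prod p w)) * Rpower q (IZR (snd x + s)))
      with (Rabs (fst (word_prod p w)) * Rpower q (IZR s))
      by (rewrite Hsplit, <- (Rmult_1_r (_ * Rpower q (IZR s))), <- Hinv; ring).
    assert (Rabs (fst x) * Rpower q (IZR (snd x + s)) <= F * Rpower q (IZR (snd x + s)))
      by (apply Rmult_le_compat_r; lra).
    lra.
Qed.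

Lemma powerRZ_IZR_nonneg p z : (0 <= z)%Z -> powerRZ (IZR p) z = IZR (p ^ z).
Proof.
  intros Hz. rewrite <- (Z2Nat.id z Hz) at 1.
  now rewrite <- pow_powerRZ, pow_IZR, Z2Nat.id.
Qed.

Lemma is_int_mul_powerRZ_le p f a b :
  p <> 0%Z -> (a <= b)%Z ->
  is_int (f * powerRZ (IZR p) a) -> is_int (f * powerRZ (IZR p) b).
Proof.
  intros Hp Hab [z Hz]. exists (z * p ^ (b - a))%Z.
  replace b with (a + (b - a))%Z at 1 by ring.
  rewrite powerRZ_add by (apply not_0_IZR; assumption).
  rewrite mult_IZR, <- Hz, <- powerRZ_IZR_nonneg by lia. ring.
Qed.

Lemma is_int_fst_word_prod p K w :
  p <> 0%Z -> (forall x, In x w -> is_int (fst x * powerRZ (IZR p) K)) ->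
  is_int (fst (word_prod p w)
          * powerRZ (IZR p) (K + total (map snd w) - lowest (map snd w))).
Proof.
  intros Hp; induction w as [|x w IH]; intros Hw.
  - exists 0%Z; simpl; ring.
  - cbn [word_prod fold_right gmul fst snd map total lowest].
    fold (word_prod p w).
    specialize (IH (fun y Hy => Hw y (or_intror Hy))).
    pose proof (Hw x (or_introl eq_refl)) as Hx.
    pose proof (lowest_le_min (map snd w)).
    set (s := total (map snd w)) in *; set (m := lowest (map snd w)) in *.
    set (k := (K + (snd x + s) - Z.min m (snd x + s))%Z).
    destruct (is_int_mul_powerRZ_le p _ K k Hp ltac:(lia) Hx) as [z1 H1].
    destruct (is_int_mul_powerRZ_le p _ (K + s - m) (- snd x + k) Hp ltac:(lia) IH)
      as [z2 H2].
    exists (z1 + z2)%Z.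
    rewrite plus_IZR, <- H1, <- H2, powerRZ_add by (apply not_0_IZR; assumption).
    ring.
Qed.

Lemma is_denom_le p f d k :
  (1 < Z.abs p)%Z -> is_denom p f d -> (0 <= k)%Z ->
  is_int (f * powerRZ (IZR p) k) -> d <= Rpower (IZR (Z.abs p)) (IZR k).
Proof.
  intros Hp (j & -> & _ & Hmin) Hk [z Hz].
  assert (Hpk : powerRZ (IZR p) k <> 0) by (apply powerRZ_NOR, not_0_IZR; lia).
  assert (Hj : (j <= Z.to_nat k)%nat).
  { apply (Hmin _ z).
    rewrite <- Hz, pow_powerRZ, Z2Nat.id by assumption.
    field; assumption. }
  rewrite <- (Z2Nat.id k Hk), <- INR_IZR_INZ, Rpower_pow by (apply IZR_lt; lia).
  apply Rle_pow; [apply IZR_le; lia | assumption].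
Qed.

Lemma in_G_uniform_bounds p C :
  p <> 0%Z -> (forall x, In x C -> in_G p x) ->
  exists F K, 0 <= F /\ (0 <= K)%Z /\
    forall x, In x C -> Rabs (fst x) <= F /\ is_int (fst x * powerRZ (IZR p) K).
Proof.
  intros Hp; induction C as [|y C IH]; intros HC.
  - exists 0, 0%Z. split; [lra | split; [lia | intros x []]].
  - destruct IH as (F & K & HF & HK & H); [intros; apply HC; now right|].
    destruct (HC y (or_introl eq_refl)) as (m & k & Hk).
    exists (Rmax F (Rabs (fst y))), (Z.max K (Z.of_nat k)).
    split; [apply Rle_trans with F; [assumption | apply Rmax_l]|].
    split; [lia|].
    intros x [<-|Hx]; split.
    + apply Rmax_r.
    + apply is_int_mul_powerRZ_le with (Z.of_nat k); [assumption | lia|].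
      exists m. rewrite Hk, <- pow_powerRZ. field. apply pow_nonzero, not_0_IZR, Hp.
    + apply Rle_trans with F; [apply H, Hx | apply Rmax_l].
    + apply is_int_mul_powerRZ_le with K; [assumption | lia | apply H, Hx].
Qed.

Lemma abs_snd_le_of_inv_closed p C c :
  (forall x, In x C -> In (ginv p x) C) -> (forall x, In x C -> (snd x <= c)%Z) ->
  forall x, In x C -> (Z.abs (snd x) <= c)%Z.
Proof.
  intros Hinv Hmax x Hx.
  pose proof (Hmax x Hx) as Hle; pose proof (Hmax _ (Hinv x Hx)) as Hle_inv.
  simpl in Hle_inv. lia.
Qed.

Lemma one_le_exponent_bound p C c :
  generates p C -> (forall x, In x C -> (snd x <= c)%Z) -> (1 <= c)%Z.
Proof.
  intros Hgen Hmax.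
  destruct (Hgen (0, 1%Z)) as (w & Hw & Hprod).
  { exists 0%Z, 0%nat. simpl. field. }
  assert (Htot : total (map snd w) = 1%Z)
    by (rewrite <- (snd_word_prod p), Hprod; reflexivity).
  assert (Hle : Forall (fun d => d <= c)%Z (map snd w))
    by (apply Forall_map, Forall_forall; auto).
  pose proof (total_le_length_mul c _ Hle). nia.
Qed.

Lemma abs_or_denom_bound (q A B N e mu a : R) (P : R -> Prop) :
  1 <= q -> 0 <= A -> 0 <= B -> 0 <= e <= N -> - (e / 2) <= mu <= 0 ->
  a <= A * (Rpower q (e / 2 + mu) + Rpower q (e / 4)) ->
  (forall d, P d -> d <= B * Rpower q (- mu)) ->
  (a <= (2 * A + B) * Rpower q (N / 4)
   \/ (forall d, P d -> d <= (2 * A + B) * Rpower q (N / 4))) /\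
  a <= (2 * A + B) * Rpower q (N / 2) /\
  (forall d, P d -> d <= (2 * A + B) * Rpower q (N / 2)).
Proof.
  intros Hq HA HB He Hmu Ha Hd.
  assert (Hpow : forall x y, x <= y -> Rpower q x <= Rpower q y)
    by (intros; apply Rle_Rpower; assumption).
  assert (Habs : forall X, Rpower q (e / 2 + mu) <= X -> Rpower q (e / 4) <= X ->
                 a <= (2 * A + B) * X).
  { intros X H1 H2. pose proof (Rpower_pos q (e / 4)). nra. }
  assert (Hden : forall X, Rpower q (- mu) <= X -> forall d, P d -> d <= (2 * A + B) * X).
  { intros X H1 d HPd. pose proof (Hd d HPd). pose proof (Rpower_pos q (- mu)). nra. }
  split; [|split].
  - destruct (Rle_lt_dec mu (- (e / 4))).
    + left. apply Habs; apply Hpow; lra.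
    + right. apply Hden, Hpow; lra.
  - apply Habs; apply Hpow; lra.
  - apply Hden, Hpow; lra.
Qed.

Section Ball.

Variables (p : Z) (C : list (R * Z)) (c K : Z) (F : R).
Hypothesis hp : (1 < Z.abs p)%Z.
Hypothesis hc : (1 <= c)%Z.
Hypothesis hCc : forall x, In x C -> (Z.abs (snd x) <= c)%Z.
Hypothesis hF : 0 <= F.
Hypothesis hK : (0 <= K)%Z.
Hypothesis hFK : forall x, In x C ->
  Rabs (fst x) <= F /\ is_int (fst x * powerRZ (IZR p) K).

Local Notation q := (IZR (Z.abs p)).

Lemma in_ball_zero_bounds n f :
  in_ball p C n (f, 0%Z) ->
  exists e mu : R, 0 <= e <= INR n * IZR c /\ - (e / 2) <= mu <= 0 /\
    Rabs f <= F * (7 + 8 / ln q) * (Rpower q (e / 2 + mu) + Rpower q (e / 4)) /\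
    forall d, is_denom p f d -> d <= Rpower q (IZR K) * Rpower q (- mu).
Proof.
  intros (w & Hw & Hlen & Hprod).
  assert (hp0 : p <> 0%Z) by lia.
  assert (hq : 2 <= q) by (apply IZR_le; lia).
  set (ds := map snd w).
  assert (Hs : total ds = 0%Z) by (unfold ds; rewrite <- (snd_word_prod p), Hprod; reflexivity).
  assert (Hf : fst (word_prod p w) = f) by (rewrite Hprod; reflexivity).
  assert (Hds : Forall (fun d => Z.abs d <= c)%Z ds)
    by (apply Forall_map, Forall_forall; auto).
  pose proof (suffix_weight_balanced_le c q ds hc hq Hds Hs) as Hweight.
  pose proof (total_sub_twice_lowest c ds Hds) as Hrange.
  pose proof (lowest_le_min ds) as Hlow.
  assert (Hlen_ds : length ds = length w) by apply length_map.
  rewrite Hlen_ds in Hweight, Hrange; rewrite Hs in Hrange, Hlow.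
  set (l := length w) in *; set (m := lowest ds) in *.
  assert (Hl0 : 0 <= INR l) by apply pos_INR.
  assert (Hcr : 1 <= IZR c) by (apply IZR_le; assumption).
  exists (INR l * IZR c), (IZR m).
  split; [split; [nra | apply Rmult_le_compat_r; [lra | apply le_INR, Hlen]]|].
  split; [split|split].
  - apply IZR_le in Hrange. rewrite minus_IZR, !mult_IZR, <- INR_IZR_INZ in Hrange.
    simpl in Hrange. lra.
  - apply IZR_le; lia.
  - pose proof (Rabs_fst_word_prod_le p F w hp0 (fun x Hx => proj1 (hFK x (Hw x Hx)))) as Hfb.
    fold ds in Hfb; rewrite Hs, Hf, Rpower_O, Rmult_1_r in Hfb by lra.
    pose proof (Rpower_pos q (INR l * IZR c / 2 + IZR m)).
    pose proof (Rpower_pos q (INR l * IZR c / 4)).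
    assert (0 < 8 / ln q) by (apply Rdiv_lt_0_compat, ln_gt_0; lra).
    apply Rle_trans with (1 := Hfb).
    apply Rle_trans with (F * (7 * Rpower q (INR l * IZR c / 2 + IZR m)
                               + 8 / ln q * Rpower q (INR l * IZR c / 4))).
    + apply Rmult_le_compat_l; assumption.
    + assert (0 <= 7 * Rpower q (INR l * IZR c / 4)
                   + 8 / ln q * Rpower q (INR l * IZR c / 2 + IZR m)) by nra.
      nra.
  - intros d Hd.
    pose proof (is_int_fst_word_prod p K w hp0 (fun x Hx => proj2 (hFK x (Hw x Hx))))
      as Hint.
    fold ds in Hint; rewrite Hs, Hf in Hint.
    apply Rle_trans with (1 := is_denom_le p f d (K + 0 - m) hp Hd ltac:(lia) Hint).
    rewrite <- Rpower_plus, <- opp_IZR, <- plus_IZR. right; f_equal; f_equal; ring.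
Qed.

End Ball.

Theorem lemma1 (p : Z) (hp : (1 < Z.abs p)%Z) (C : list (R * Z)) (c : Z)
  (hCG : forall x, In x C -> in_G p x)
  (hCinv : forall x, In x C -> In (ginv p x) C)
  (hgen : generates p C)
  (hc_in : exists x, In x C /\ snd x = c)
  (hc_max : forall x, In x C -> (snd x <= c)%Z) :
  exists M : R,
    forall (n : nat) (f : R), in_ball p C n (f, 0%Z) ->
      (Rabs f <= M * Rpower (IZR (Z.abs p)) (INR n * IZR c / 4)
       \/ (forall d, is_denom p f d ->
             d <= M * Rpower (IZR (Z.abs p)) (INR n * IZR c / 4))) /\
      Rabs f <= M * Rpower (IZR (Z.abs p)) (INR n * IZR c / 2) /\
      (forall d, is_denom p f d ->
         d <= M * Rpower (IZR (Z.abs p)) (INR n * IZR c / 2)).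
Proof.
  pose proof (one_le_exponent_bound p C c hgen hc_max) as hc.
  pose proof (abs_snd_le_of_inv_closed p C c hCinv hc_max) as hCc.
  destruct (in_G_uniform_bounds p C ltac:(lia) hCG) as (F & K & hF & hK & hFK).
  set (q := IZR (Z.abs p)).
  assert (hq : 2 <= q) by (apply IZR_le; lia).
  assert (hA : 0 <= F * (7 + 8 / ln q)).
  { apply Rmult_le_pos; [assumption|].
    assert (0 < 8 / ln q) by (apply Rdiv_lt_0_compat, ln_gt_0; lra). lra. }
  exists (2 * (F * (7 + 8 / ln q)) + Rpower q (IZR K)).
  intros n f Hball.
  destruct (in_ball_zero_bounds p C c K F hp hc hCc hF hK hFK n f Hball)
    as (e & mu & He & Hmu & Hf & Hd).
  apply abs_or_denom_bound with e mu; try assumption.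
  - lra.
  - left; apply Rpower_pos.
Qed.
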